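(* Let $(p_n)$ be a sequence with $0<\liminf_{n\to\infty} p_n\leq \limsup_{n\to\infty} p_n<1$, let $p=p_n$, $q=q_n=1-p_n$ and $V=npq$, and fix $M>0$. For $\varphi>0$ put $R=|pe^{i\varphi}+q|^n$ and \[ R_2=-\tfrac{1}{2}V,\quad R_4=\tfrac{1}{4}V\big(\tfrac{1}{6}-pq\big),\quad R_6=-\tfrac{1}{6}V\big(\tfrac{1}{120}-\tfrac{1}{4}pq+p^2q^2\big). \] Then, as $n\to\infty$, uniformly for $0<\varphi\leq M/V^{1/4}$, \[ R= e^{R_2\varphi^2}\Big(1+R_4\varphi^4+R_6\varphi^6+\frac{1}{2}R_4^2\varphi^8+\sum_{k=1}^3 O(n^k\varphi^{2k+6})\Big), \] i.e. there are $C>0$ and $N$ such that for all $n\geq N$ and all $0<\varphi\leq M/V^{1/4}$ the quantity $e^{-R_2\varphi^2}R-\big(1+R_4\varphi^4+R_6\varphi^6+\frac{1}{2}R_4^2\varphi^8\big)$ has absolute value at most $C\sum_{k=1}^3 n^k\varphi^{2k+6}$. *)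

From Stdlib Require Import Reals.
From Coquelicot Require Import Coquelicot.
Open Scope R_scope.

Definition expi (phi : R) : C := (cos phi, sin phi).

Definition Rmod (p : R) (n : nat) (phi : R) : R :=
  (Cmod (RtoC p * expi phi + RtoC (1 - p))) ^ n.

Definition Vvar (p : R) (n : nat) : R := INR n * p * (1 - p).

Definition R2 (p : R) (n : nat) : R := - / 2 * Vvar p n.
Definition R4 (p : R) (n : nat) : R :=
  / 4 * Vvar p n * (/ 6 - p * (1 - p)).
Definition R6 (p : R) (n : nat) : R :=
  - / 6 * Vvar p n * (/ 120 - / 4 * (p * (1 - p)) + p ^ 2 * (1 - p) ^ 2).

(* With s = pq we have |p e^{i phi} + q|^2 = 1 - 2 s (1 - cos phi), so
   R = exp (n/2 ln (1 - 2 s (1 - cos phi))).  Expanding the logarithm and the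
   cosine gives  n/2 ln (1 - 2 s (1 - cos phi)) + n s phi^2 / 2
   = R4 phi^4 + R6 phi^6 + O(n phi^8)  uniformly for s in (0, 1/4] and
   phi in (0, 1].  Since s stays away from 0 the constraint
   phi <= M / V^{1/4} makes n phi^4 bounded, so the exponent L is bounded and
   exp L = 1 + L + L^2/2 + O(L^3); the remainders O(n phi^8), O(n^2 phi^10)
   and O(n^3 phi^12) come from the O(n phi^8) error, the cross terms of L^2 and
   L^3 respectively. *)

From Stdlib Require Import Reals Lra Lia.
From Coquelicot Require Import Coquelicot.
Open Scope R_scope.

Lemma Rabs_mult_le (x y X Y : R) :
  Rabs x <= X -> Rabs y <= Y -> Rabs (x * y) <= X * Y.
Proof. intros. rewrite Rabs_mult. apply Rmult_le_compat; auto; apply Rabs_pos. Qed.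

Lemma pow_le_pow_of_le_1 (t : R) (m n : nat) :
  0 <= t <= 1 -> (m <= n)%nat -> t ^ n <= t ^ m.
Proof.
  intros Ht Hmn. replace n with (m + (n - m))%nat by lia. rewrite pow_add.
  rewrite <- (Rmult_1_r (t ^ m)) at 2.
  apply Rmult_le_compat_l; [apply pow_le; lra|].
  rewrite <- (pow1 (n - m)). apply pow_incr. lra.
Qed.

Lemma even_pows_decreasing (t : R) : 0 < t <= 1 ->
  0 < t ^ 8 <= t ^ 6 /\ t ^ 6 <= t ^ 4 /\ t ^ 4 <= t ^ 2 /\ t ^ 2 <= 1.
Proof.
  intros Ht. rewrite <- (pow_O t) at 1.
  repeat split; try (apply pow_le_pow_of_le_1; [lra|lia]). apply pow_lt; lra.
Qed.

Lemma Rabs_le_of_deriv_bound (f f' : R -> R) (B K : R) (k : nat) :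
  0 <= K -> f 0 = 0 ->
  (forall y, Rabs y <= B -> is_derive f y (f' y)) ->
  (forall y, Rabs y <= B -> Rabs (f' y) <= K * Rabs y ^ k) ->
  forall x, Rabs x <= B -> Rabs (f x) <= K * Rabs x ^ S k.
Proof.
  intros HK Hf0 Hder Hf' x Hx.
  assert (Hseg : forall c, Rmin 0 x <= c <= Rmax 0 x -> Rabs c <= Rabs x).
  { intros c Hc. rewrite <- (Rminus_0_r c), <- (Rminus_0_r x).
    apply Rabs_le_between_min_max. rewrite Rmin_comm, Rmax_comm. exact Hc. }
  destruct (MVT_gen f 0 x f') as [c [Hc Hmvt]].
  - intros y Hy. apply Hder. enough (Rabs y <= Rabs x) by lra. apply Hseg. lra.
  - intros y Hy. apply continuity_pt_filterlim, (ex_derive_continuous f).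
    exists (f' y). apply Hder. enough (Rabs y <= Rabs x) by lra. apply Hseg. lra.
  - apply Hseg in Hc.
    rewrite Hf0, !Rminus_0_r in Hmvt. rewrite Hmvt, Rabs_mult. simpl.
    rewrite (Rmult_comm (Rabs x)), <- Rmult_assoc.
    apply Rmult_le_compat_r; [apply Rabs_pos|].
    eapply Rle_trans; [apply Hf'; lra|].
    apply Rmult_le_compat_l; auto. apply pow_incr. split; [apply Rabs_pos|auto].
Qed.

Lemma exp_taylor2_bound (B x : R) :
  Rabs x <= B -> Rabs (exp x - (1 + x + x ^ 2 / 2)) <= exp B * Rabs x ^ 3.
Proof.
  intros Hx.
  assert (HeB : 0 <= exp B) by (left; apply exp_pos).
  assert (H1 : forall y, Rabs y <= B -> Rabs (exp y - 1) <= exp B * Rabs y ^ 1).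
  { apply (Rabs_le_of_deriv_bound _ exp); auto.
    - rewrite exp_0; ring.
    - intros y _. auto_derive; auto; ring.
    - intros y Hy. rewrite pow_O, Rmult_1_r, Rabs_right by (left; apply exp_pos).
      apply Rabs_le_between in Hy.
      destruct (Req_dec y B) as [->|]; [lra|left; apply exp_increasing; lra]. }
  assert (H2 : forall y, Rabs y <= B -> Rabs (exp y - 1 - y) <= exp B * Rabs y ^ 2).
  { apply (Rabs_le_of_deriv_bound _ (fun y => exp y - 1)); auto.
    - rewrite exp_0; ring.
    - intros y _. auto_derive; auto; ring. }
  replace (exp x - (1 + x + x ^ 2 / 2)) with (exp x - 1 - x - x ^ 2 / 2) by ring.
  revert x Hx. apply (Rabs_le_of_deriv_bound _ (fun y => exp y - 1 - y)); auto.
  - rewrite exp_0; field.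
  - intros y _. auto_derive; auto; field.
Qed.

Lemma ln_one_sub_taylor3_bound (u : R) :
  Rabs u <= / 2 -> Rabs (ln (1 - u) - (- u - u ^ 2 / 2 - u ^ 3 / 3)) <= 2 * Rabs u ^ 4.
Proof.
  replace (ln (1 - u) - (- u - u ^ 2 / 2 - u ^ 3 / 3))
    with (ln (1 - u) + u + u ^ 2 / 2 + u ^ 3 / 3) by ring.
  revert u.
  apply (Rabs_le_of_deriv_bound _ (fun y => - (y ^ 3) / (1 - y))); try lra.
  - rewrite Rminus_0_r, ln_1. field.
  - intros y Hy. apply Rabs_le_between in Hy.
    auto_derive; [lra|]. field. lra.
  - intros y Hy. apply Rabs_le_between in Hy.
    unfold Rdiv. rewrite Rabs_mult, Rabs_Ropp, RPow_abs, Rabs_inv, (Rabs_right (1 - y)) by lra.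
    rewrite Rmult_comm. apply Rmult_le_compat_r; [apply Rabs_pos|].
    replace 2 with (/ / 2) by field. apply Rinv_le_contravar; lra.
Qed.

Lemma one_sub_cos_bounds (t : R) : 0 < t <= 1 ->
  t ^ 2 / 2 - t ^ 4 / 24 + t ^ 6 / 720 - t ^ 8 / 40320 <= 1 - cos t
  <= t ^ 2 / 2 - t ^ 4 / 24 + t ^ 6 / 720.
Proof.
  intros Ht. pose proof PI2_1.
  destruct (cos_bound t 1) as [Hlo Hhi]; try lra.
  unfold cos_approx, cos_term in Hlo, Hhi. cbn [sum_f_R0 Nat.mul Nat.add] in Hlo, Hhi.
  rewrite !INR_IZR_INZ in Hlo. rewrite !INR_IZR_INZ in Hhi.
  change (Z.of_nat (Factorial.fact 0)) with 1%Z in Hlo, Hhi.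
  change (Z.of_nat (Factorial.fact 2)) with 2%Z in Hlo, Hhi.
  change (Z.of_nat (Factorial.fact 4)) with 24%Z in Hlo, Hhi.
  change (Z.of_nat (Factorial.fact 6)) with 720%Z in Hlo, Hhi.
  change (Z.of_nat (Factorial.fact 8)) with 40320%Z in Hhi.
  simpl pow in Hlo, Hhi. lra.
Qed.

Lemma log_series_cancellation (s t d u : R) :
  0 < s <= / 4 -> 0 < t <= 1 -> 0 <= d <= t ^ 8 / 40320 ->
  u = 2 * s * (t ^ 2 / 2 - t ^ 4 / 24 + t ^ 6 / 720 - d) ->
  Rabs (- (u + u ^ 2 / 2 + u ^ 3 / 3) / 2 + s * t ^ 2 / 2
        - (/ 4 * s * (/ 6 - s) * t ^ 4 - / 6 * s * (/ 120 - / 4 * s + s ^ 2) * t ^ 6))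
  <= 4 * t ^ 8.
Proof.
  intros Hs Ht Hd Hu.
  pose (a := s * t ^ 2 - s * t ^ 4 / 12).
  pose (v := s * t ^ 2).
  pose (r := u - a).
  assert (Hr : r = s * t ^ 6 / 360 - 2 * s * d) by (unfold r, a; rewrite Hu; field).
  destruct (even_pows_decreasing t Ht) as [[Ht8 Ht86] [Ht64 [Ht42 Ht2]]].
  assert (Hrb : Rabs r <= t ^ 6) by (apply Rabs_le; rewrite Hr; nra).
  assert (Hab : 0 <= a <= t ^ 2) by (unfold a; nra).
  assert (Hub : 0 <= u <= v) by (unfold v; rewrite Hu; nra).
  (* Every term of degree at most 6 in t cancels; what is left is a sum of four O(t^8) terms. *)
  replace (- (u + u ^ 2 / 2 + u ^ 3 / 3) / 2 + s * t ^ 2 / 2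
        - (/ 4 * s * (/ 6 - s) * t ^ 4 - / 6 * s * (/ 120 - / 4 * s + s ^ 2) * t ^ 6))
    with (s * d - s ^ 2 * t ^ 8 / 576 - (2 * a + r) * r / 4 - (u - v) * (u ^ 2 + u * v + v ^ 2) / 6)
    by (unfold r, a, v; rewrite Hu; field).
  assert (P1 : Rabs (s * d) <= t ^ 8) by (apply Rabs_le; nra).
  assert (P2 : Rabs (s ^ 2 * t ^ 8 / 576) <= t ^ 8) by
    (assert (0 < s ^ 2 <= 1) by (simpl; nra); apply Rabs_le; nra).
  assert (P3 : Rabs ((2 * a + r) * r / 4) <= t ^ 8).
  { assert (H2ar : Rabs (2 * a + r) <= 3 * t ^ 2).
    { apply Rabs_le_between in Hrb. apply Rabs_le. nra. }
    unfold Rdiv. rewrite Rabs_mult, (Rabs_right (/ 4)) by lra.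
    pose proof (Rabs_mult_le _ _ _ _ H2ar Hrb). nra. }
  assert (P4 : Rabs ((u - v) * (u ^ 2 + u * v + v ^ 2) / 6) <= t ^ 8).
  { assert (Huv : Rabs (u - v) <= t ^ 4).
    { replace (u - v) with (r - s * t ^ 4 / 12) by (unfold r, a, v; ring).
      apply Rabs_le_between in Hrb. apply Rabs_le. nra. }
    assert (Hq : Rabs (u ^ 2 + u * v + v ^ 2) <= 3 * t ^ 4).
    { apply Rabs_le. unfold v in *. nra. }
    unfold Rdiv. rewrite Rabs_mult, (Rabs_right (/ 6)) by lra.
    pose proof (Rabs_mult_le _ _ _ _ Huv Hq). nra. }
  apply Rabs_le_between in P1, P2, P3, P4. apply Rabs_le. lra.
Qed.

Lemma half_ln_expansion (s t : R) : 0 < s <= / 4 -> 0 < t <= 1 ->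
  Rabs (/ 2 * ln (1 - 2 * s * (1 - cos t)) + s * t ^ 2 / 2
        - (/ 4 * s * (/ 6 - s) * t ^ 4 - / 6 * s * (/ 120 - / 4 * s + s ^ 2) * t ^ 6))
  <= 5 * t ^ 8.
Proof.
  intros Hs Ht.
  pose proof (one_sub_cos_bounds t Ht) as Hc.
  set (c := 1 - cos t) in *.
  set (u := 2 * s * c).
  destruct (even_pows_decreasing t Ht) as [[Ht8 Ht86] [Ht64 [Ht42 Ht2]]].
  assert (Hu : 0 <= u <= s * t ^ 2) by (unfold u; nra).
  assert (Hu4 : 2 * Rabs u ^ 4 <= 2 * t ^ 8).
  { rewrite Rabs_right by lra. replace (t ^ 8) with ((t ^ 2) ^ 4) by ring.
    apply Rmult_le_compat_l; [lra|]. apply pow_incr. nra. }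
  pose proof (ln_one_sub_taylor3_bound u ltac:(apply Rabs_le; nra)) as Hln.
  pose proof (log_series_cancellation s t (t ^ 2 / 2 - t ^ 4 / 24 + t ^ 6 / 720 - c) u
                Hs Ht ltac:(lra) ltac:(unfold u; ring)) as Hpoly.
  apply Rabs_le_between in Hln, Hpoly. apply Rabs_le. lra.
Qed.

Lemma exp_expansion_remainder (m t Z r4 r6 D : R) :
  0 <= m -> 0 < t <= 1 -> m * t ^ 4 <= Z ->
  Rabs r4 <= m -> Rabs r6 <= m -> Rabs D <= 5 * m * t ^ 8 ->
  Rabs (exp (r4 * t ^ 4 + r6 * t ^ 6 + D)
        - (1 + r4 * t ^ 4 + r6 * t ^ 6 + / 2 * r4 ^ 2 * t ^ 8))
  <= (25 + 343 * exp (7 * Z)) * (m * t ^ 8 + m ^ 2 * t ^ 10 + m ^ 3 * t ^ 12).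
Proof.
  intros Hm Ht HZ Hr4 Hr6 HD.
  destruct (even_pows_decreasing t Ht) as [[Ht8 Ht86] [Ht64 _]].
  assert (Ht4 : 0 < t ^ 4) by lra.
  assert (Ht6 : 0 < t ^ 6) by lra.
  apply Rabs_le_between in Hr4, Hr6, HD.
  set (L := r4 * t ^ 4 + r6 * t ^ 6 + D).
  assert (HLsub : Rabs (L - r4 * t ^ 4) <= 6 * m * t ^ 6).
  { apply Rabs_le. unfold L. nra. }
  assert (HLadd : Rabs (L + r4 * t ^ 4) <= 8 * m * t ^ 4).
  { apply Rabs_le. unfold L. nra. }
  assert (HL : Rabs L <= 7 * m * t ^ 4).
  { apply Rabs_le. unfold L. nra. }
  assert (HL3 : Rabs L ^ 3 <= 343 * (m ^ 3 * t ^ 12)).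
  { replace (343 * (m ^ 3 * t ^ 12)) with ((7 * m * t ^ 4) ^ 3) by ring.
    apply pow_incr. split; [apply Rabs_pos|lra]. }
  pose proof (exp_taylor2_bound (7 * Z) L ltac:(nra)) as Hexp.
  assert (Hquad : Rabs ((L - r4 * t ^ 4) * (L + r4 * t ^ 4) / 2) <= 24 * (m ^ 2 * t ^ 10)).
  { pose proof (Rabs_mult_le _ _ _ _ HLsub HLadd).
    unfold Rdiv. rewrite Rabs_mult, (Rabs_right (/ 2)) by lra.
    replace (24 * (m ^ 2 * t ^ 10)) with (6 * m * t ^ 6 * (8 * m * t ^ 4) * / 2) by field.
    nra. }
  replace (exp L - (1 + r4 * t ^ 4 + r6 * t ^ 6 + / 2 * r4 ^ 2 * t ^ 8))
    with ((exp L - (1 + L + L ^ 2 / 2)) + D + (L - r4 * t ^ 4) * (L + r4 * t ^ 4) / 2)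
    by (unfold L; field).
  assert (HX1 : 0 <= m * t ^ 8) by nra.
  assert (HX2 : 0 <= m ^ 2 * t ^ 10) by (pose proof (pow_lt t 10); pose proof (pow2_ge_0 m); nra).
  assert (HX3 : 0 <= m ^ 3 * t ^ 12) by (pose proof (pow_lt t 12); pose proof (pow_le m 3); nra).
  assert (HeZ : 0 < exp (7 * Z)) by apply exp_pos.
  apply Rabs_le_between in Hexp, Hquad. apply Rabs_le. nra.
Qed.

Lemma Rmod_eq_exp_ln (p : R) (n : nat) (t : R) :
  0 < 1 - 2 * (p * (1 - p)) * (1 - cos t) ->
  Rmod p n t = exp (INR n * (/ 2 * ln (1 - 2 * (p * (1 - p)) * (1 - cos t)))).
Proof.
  intros HX. set (X := 1 - 2 * (p * (1 - p)) * (1 - cos t)) in *.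
  assert (HC : Cmod (RtoC p * expi t + RtoC (1 - p)) = sqrt X).
  { unfold Cmod, expi, RtoC. simpl. f_equal.
    pose proof (sin2_cos2 t) as Hsc. unfold Rsqr in Hsc. unfold X. nra. }
  assert (Hs : 0 < sqrt X) by (apply sqrt_lt_R0; auto).
  unfold Rmod. rewrite HC, <- Rpower_pow by auto. unfold Rpower. f_equal.
  rewrite <- (sqrt_sqrt X), ln_mult by lra. rewrite sqrt_sqrt by lra. lra.
Qed.

Lemma Rmod_local_expansion (Z p t : R) (n : nat) :
  0 < p < 1 -> 0 < t <= 1 -> INR n * t ^ 4 <= Z ->
  Rabs (exp (- R2 p n * t ^ 2) * Rmod p n t
        - (1 + R4 p n * t ^ 4 + R6 p n * t ^ 6 + / 2 * R4 p n ^ 2 * t ^ 8))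
  <= (25 + 343 * exp (7 * Z)) * (INR n * t ^ 8 + INR n ^ 2 * t ^ 10 + INR n ^ 3 * t ^ 12).
Proof.
  intros Hp Ht HZ.
  set (s := p * (1 - p)). set (m := INR n).
  assert (Hs : 0 < s <= / 4).
  { unfold s. split; [apply Rmult_lt_0_compat; lra|].
    pose proof (pow2_ge_0 (p - / 2)). nra. }
  assert (Hm : 0 <= m) by apply pos_INR.
  destruct (even_pows_decreasing t Ht) as [[Ht8 Ht86] [Ht64 [_ Ht2]]].
  assert (Hc : 1 - cos t <= t ^ 2 / 2) by (pose proof (one_sub_cos_bounds t Ht); lra).
  assert (HX : 0 < 1 - 2 * s * (1 - cos t)).
  { pose proof (COS_bound t) as Hcos. nra. }
  rewrite (Rmod_eq_exp_ln p n t HX), <- exp_plus. fold s m.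
  set (D := m * (/ 2 * ln (1 - 2 * s * (1 - cos t)) + s * t ^ 2 / 2
        - (/ 4 * s * (/ 6 - s) * t ^ 4 - / 6 * s * (/ 120 - / 4 * s + s ^ 2) * t ^ 6))).
  replace (- R2 p n * t ^ 2 + m * (/ 2 * ln (1 - 2 * s * (1 - cos t))))
    with (R4 p n * t ^ 4 + R6 p n * t ^ 6 + D)
    by (unfold D, R2, R4, R6, Vvar, s, m; field).
  apply (exp_expansion_remainder m); auto.
  - apply Rabs_le. replace (R4 p n) with (m * (/ 4 * s * (/ 6 - s)))
      by (unfold R4, Vvar, s, m; ring).
    assert (-1 <= / 4 * s * (/ 6 - s) <= 1) by nra. nra.
  - apply Rabs_le. replace (R6 p n) with (m * (- / 6 * s * (/ 120 - / 4 * s + s ^ 2)))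
      by (unfold R6, Vvar, s, m; ring).
    assert (-1 <= - / 6 * s * (/ 120 - / 4 * s + s ^ 2) <= 1) by (simpl; nra). nra.
  - unfold D. rewrite Rabs_mult, (Rabs_right m) by lra.
    replace (5 * m * t ^ 8) with (m * (5 * t ^ 8)) by ring.
    apply Rmult_le_compat_l; [lra|]. apply half_ln_expansion; lra.
Qed.

Lemma eventually_between_of_LimInf_LimSup (p : nat -> R) :
  Rbar_lt (Finite 0) (LimInf_seq p) -> Rbar_lt (LimSup_seq p) (Finite 1) ->
  exists a b N, 0 < a /\ b < 1 /\ forall n, (N <= n)%nat -> a <= p n <= b.
Proof.
  intros Hinf Hsup.
  destruct (ex_LimInf_seq p) as [li Hli]. destruct (ex_LimSup_seq p) as [ls Hls].
  rewrite (is_LimInf_seq_unique _ _ Hli) in Hinf.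
  rewrite (is_LimSup_seq_unique _ _ Hls) in Hsup.
  assert (Hlo : exists a N1, 0 < a /\ forall n, (N1 <= n)%nat -> a <= p n).
  { destruct li as [l| |]; simpl in Hinf; try contradiction.
    - destruct (Hli (mkposreal (l / 2) ltac:(lra))) as [_ [N1 HN1]].
      exists (l / 2), N1. split; [lra|]. intros n Hn. specialize (HN1 n Hn). simpl in HN1. lra.
    - destruct (Hli 1) as [N1 HN1]. exists 1, N1. split; [lra|].
      intros n Hn. specialize (HN1 n Hn). lra. }
  assert (Hhi : exists b N2, b < 1 /\ forall n, (N2 <= n)%nat -> p n <= b).
  { destruct ls as [l| |]; simpl in Hsup; try contradiction.
    - destruct (Hls (mkposreal ((1 - l) / 2) ltac:(lra))) as [_ [N2 HN2]].
      exists ((1 + l) / 2), N2. split; [lra|]. intros n Hn. specialize (HN2 n Hn). simpl in HN2. lra.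
    - destruct (Hls 0) as [N2 HN2]. exists 0, N2. split; [lra|].
      intros n Hn. specialize (HN2 n Hn). lra. }
  destruct Hlo as [a [N1 [Ha HN1]]]. destruct Hhi as [b [N2 [Hb HN2]]].
  exists a, b, (Nat.max N1 N2). repeat split; auto; [apply HN1 | apply HN2]; lia.
Qed.

Lemma pow4_mul_le_of_le_div_root (V M phi : R) :
  0 < V -> 0 < phi -> phi <= M / Rpower V (/ 4) -> phi ^ 4 * V <= M ^ 4.
Proof.
  intros HV Hphi Hle.
  assert (Hroot : 0 < Rpower V (/ 4)) by apply exp_pos.
  assert (Hroot4 : Rpower V (/ 4) ^ 4 = V).
  { rewrite <- Rpower_pow, Rpower_mult by exact Hroot.
    replace (/ 4 * INR 4) with 1 by (simpl; field). apply Rpower_1; lra. }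
  rewrite <- Hroot4, <- Rpow_mult_distr.
  apply pow_incr. split; [nra|].
  apply Rmult_le_reg_r with (/ Rpower V (/ 4)); [apply Rinv_0_lt_compat; lra|].
  rewrite Rmult_assoc, Rinv_r, Rmult_1_r by lra. exact Hle.
Qed.

Theorem lemma3p2 (p : nat -> R) (M : R) :
  Rbar_lt (Finite 0) (LimInf_seq p) ->
  Rbar_le (LimInf_seq p) (LimSup_seq p) ->
  Rbar_lt (LimSup_seq p) (Finite 1) ->
  0 < M ->
  exists C : R, 0 < C /\ exists N : nat,
    forall (n : nat) (phi : R), (N <= n)%nat ->
      0 < phi -> phi <= M / Rpower (Vvar (p n) n) (/ 4) ->
      Rabs (exp (- R2 (p n) n * phi ^ 2) * Rmod (p n) n phi
            - (1 + R4 (p n) n * phi ^ 4 + R6 (p n) n * phi ^ 6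
                 + / 2 * (R4 (p n) n) ^ 2 * phi ^ 8))
      <= C * (INR n * phi ^ 8 + INR n ^ 2 * phi ^ 10 + INR n ^ 3 * phi ^ 12).
Proof.
  intros Hinf _ Hsup HM.
  destruct (eventually_between_of_LimInf_LimSup p Hinf Hsup) as [a [b [N0 [Ha [Hb Hab]]]]].
  pose proof (Hab N0 (le_n _)) as HabN0.
  set (smin := a * (1 - b)).
  assert (Hsmin : 0 < smin) by (unfold smin; nra).
  assert (HM4 : 0 < M ^ 4) by (apply pow_lt; lra).
  set (Z := M ^ 4 / smin).
  exists (25 + 343 * exp (7 * Z)). split; [pose proof (exp_pos (7 * Z)); lra|].
  destruct (INR_archimed smin (M ^ 4) Hsmin) as [N1 HN1].
  exists (Nat.max N0 N1). intros n phi Hn Hphi Hle.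
  destruct (Hab n ltac:(lia)) as [Hpa Hpb].
  assert (Hs : smin <= p n * (1 - p n)) by (unfold smin; nra).
  assert (Hm : INR N1 <= INR n) by (apply le_INR; lia).
  assert (HnV : M ^ 4 < INR n * (p n * (1 - p n))).
  { pose proof (pos_INR n). nra. }
  assert (HV : Vvar (p n) n = INR n * (p n * (1 - p n))) by (unfold Vvar; ring).
  rewrite HV in Hle.
  assert (Hphi4 : phi ^ 4 * (INR n * (p n * (1 - p n))) <= M ^ 4).
  { apply pow4_mul_le_of_le_div_root; auto. lra. }
  apply Rmod_local_expansion; [lra| split; [lra|] |].
  - destruct (Rle_lt_dec phi 1) as [|Hgt]; auto.
    pose proof (Rlt_pow_R1 phi 4 Hgt ltac:(lia)). nra.
  - unfold Z. apply Rmult_le_reg_r with smin; auto.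
    replace (M ^ 4 / smin * smin) with (M ^ 4) by (field; lra).
    pose proof (pow_lt phi 4 Hphi). pose proof (pos_INR n). nra.
Qed.
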